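(* Let $R$ be a Noetherian Banach–Tate $\mathbb{Z}_p$-algebra with norm $|\cdot|$ and multiplicative pseudo-uniformizer $\varpi$, and let $\kappa:T_0\to R^\times$ be a continuous character. Then there exists a norm $|\cdot|'$ on $R$ making $R$ a Banach–Tate $\mathbb{Z}_p$-algebra, bounded-equivalent to $|\cdot|^s$ for some real $s>0$, such that $|\kappa(t)|'\le1$ for all $t\in T_0$, $|\kappa(t)-1|'<1$ for all $t\in T_\epsilon$, and $\varpi$ is a multiplicative pseudo-uniformizer for $|\cdot|'$.
   Context: $p$ prime, $\epsilon=1$ if $p\neq2$ and $\epsilon=2$ if $p=2$. $T_0=\mathbf{T}(\mathbb{Z}_p)$ where $\mathbf{T}=\prod_{v\mid p}\mathrm{Res}_{\mathcal{O}_{F_v}/\mathbb{Z}_p}\mathbf{T}_v$ for split tori $\mathbf{T}_v$ over $\mathcal{O}_{F_v}$ ($F$ a number field), and $T_\epsilon=\ker(T_0\to\mathbf{T}(\mathbb{Z}/p^\epsilon))$. Norms are non-archimedean, submultiplicative, $|1|=1$. A Banach–Tate $\mathbb{Z}_p$-algebra is a complete normed ring with a unit $\varpi$, $|\varpi|<1$, $|\varpi s|=|\varpi||s|$ for all $s$ (multiplicative pseudo-uniformizer), and a ring map $\mathbb{Z}_p\to R$ with $|x|\le|x|_p$. Norms $|\cdot|_1,|\cdot|_2$ are bounded-equivalent if $C_1|r|_1\le|r|_2\le C_2|r|_1$ for constants $C_1,C_2>0$. *)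

From HB Require Import structures.
From mathcomp Require Import all_boot all_order all_algebra.
From Stdlib Require Rdefinitions.
From mathcomp Require Import boolp classical_sets reals Rstruct exp.

Set Implicit Arguments.
Unset Strict Implicit.
Unset Printing Implicit Defensive.
Import Order.TTheory GRing.Theory Num.Theory.
Local Open Scope ring_scope.

(* The ring Z_p of p-adic integers, as the inverse limit of Z/p^n Z:         *)
(* an element is a sequence x with x n in [0, p^n) the residue mod p^n,      *)
(* and x (n+1) mod p^n = x n.                                                *)

Definition zmodn (p n : nat) : int := ((p ^ n)%N)%:Z.

Definition zp_coh (p : nat) (x : nat -> int) :=
  forall n, (x n.+1 %% zmodn p n)%Z = x n.

Record Zpadic (p : nat) := MkZp { zp_seq : nat -> int ; zp_cohP : zp_coh p zp_seq }.

HB.instance Definition _ (p : nat) := gen_eqMixin (Zpadic p).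
HB.instance Definition _ (p : nat) := gen_choiceMixin (Zpadic p).

Lemma zp_inj (p : nat) (x y : Zpadic p) : zp_seq x = zp_seq y -> x = y.
Proof.
case: x => fx hx; case: y => fy hy /= e; subst fy.
by rewrite (Prop_irrelevance hx hy).
Qed.

Lemma zp_red (p : nat) (x : Zpadic p) n : (zp_seq x n %% zmodn p n)%Z = zp_seq x n.
Proof. by rewrite -(zp_cohP x n) modz_mod. Qed.

Lemma modz_dvdm (m d1 d2 : int) :
  (d1 %| d2)%Z -> ((m %% d2)%Z %% d1)%Z = (m %% d1)%Z.
Proof.
move=> /dvdzP [k ->].
by rewrite [in RHS](intdiv.divz_eq m (k * d1)) mulrA modzMDl.
Qed.

Lemma zmodn_dvd (p n : nat) : (zmodn p n %| zmodn p n.+1)%Z.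
Proof. by rewrite /zmodn dvdzE /= expnS dvdn_mull. Qed.

Definition zp_wcoh (p : nat) (f : nat -> int) :=
  forall n, (f n.+1 %% zmodn p n)%Z = (f n %% zmodn p n)%Z.

Lemma zp_norm_coh (p : nat) (f : nat -> int) :
  zp_wcoh p f -> zp_coh p (fun n => (f n %% zmodn p n)%Z).
Proof. by move=> H n; rewrite modz_dvdm ?zmodn_dvd // H. Qed.

Lemma zp_coh_wcoh (p : nat) (x : Zpadic p) : zp_wcoh p (zp_seq x).
Proof. by move=> n; rewrite zp_cohP zp_red. Qed.

Definition zp_mk (p : nat) (f : nat -> int) (H : zp_wcoh p f) : Zpadic p :=
  @MkZp p (fun n => (f n %% zmodn p n)%Z) (zp_norm_coh H).

Lemma zp_wcoh_cst (p : nat) (c : int) : zp_wcoh p (fun _ => c).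
Proof. by []. Qed.

Lemma zp_wcohD (p : nat) (f g : nat -> int) :
  zp_wcoh p f -> zp_wcoh p g -> zp_wcoh p (fun n => f n + g n).
Proof. by move=> Hf Hg n; rewrite -modzDm Hf Hg modzDm. Qed.

Lemma zp_wcohM (p : nat) (f g : nat -> int) :
  zp_wcoh p f -> zp_wcoh p g -> zp_wcoh p (fun n => f n * g n).
Proof. by move=> Hf Hg n; rewrite -modzMm Hf Hg modzMm. Qed.

Lemma zp_wcohN (p : nat) (f : nat -> int) :
  zp_wcoh p f -> zp_wcoh p (fun n => - f n).
Proof. by move=> Hf n; rewrite -modzNm Hf modzNm. Qed.

Definition zp_zero (p : nat) : Zpadic p := zp_mk (zp_wcoh_cst p 0).
Definition zp_one (p : nat) : Zpadic p := zp_mk (zp_wcoh_cst p 1).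
Definition zp_add (p : nat) (x y : Zpadic p) : Zpadic p :=
  zp_mk (zp_wcohD (zp_coh_wcoh x) (zp_coh_wcoh y)).
Definition zp_mul (p : nat) (x y : Zpadic p) : Zpadic p :=
  zp_mk (zp_wcohM (zp_coh_wcoh x) (zp_coh_wcoh y)).
Definition zp_opp (p : nat) (x : Zpadic p) : Zpadic p := zp_mk (zp_wcohN (zp_coh_wcoh x)).

Lemma zp_addA (p : nat) : associative (@zp_add p).
Proof.
move=> x y z; apply: zp_inj; apply: funext => n /=.
by rewrite modzDml modzDmr addrA.
Qed.

Lemma zp_addC (p : nat) : commutative (@zp_add p).
Proof. by move=> x y; apply: zp_inj; apply: funext => n /=; rewrite addrC. Qed.

Lemma zp_add0 (p : nat) : left_id (@zp_zero p) (@zp_add p).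
Proof.
by move=> x; apply: zp_inj; apply: funext => n /=; rewrite mod0z add0r zp_red.
Qed.

Lemma zp_addN (p : nat) : left_inverse (@zp_zero p) (@zp_opp p) (@zp_add p).
Proof.
by move=> x; apply: zp_inj; apply: funext => n /=; rewrite modzDml addNr.
Qed.

HB.instance Definition _ (p : nat) :=
  GRing.isZmodule.Build (Zpadic p) (@zp_addA p) (@zp_addC p) (@zp_add0 p) (@zp_addN p).

Lemma zp_mulA (p : nat) : associative (@zp_mul p).
Proof.
move=> x y z; apply: zp_inj; apply: funext => n /=.
by rewrite modzMml modzMmr mulrA.
Qed.

Lemma zp_mulC (p : nat) : commutative (@zp_mul p).
Proof. by move=> x y; apply: zp_inj; apply: funext => n /=; rewrite mulrC. Qed.

Lemma zp_mul1 (p : nat) : left_id (@zp_one p) (@zp_mul p).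
Proof.
by move=> x; apply: zp_inj; apply: funext => n /=; rewrite modzMml mul1r zp_red.
Qed.

Lemma zp_mulDl (p : nat) : left_distributive (@zp_mul p) (@zp_add p).
Proof.
move=> x y z; apply: zp_inj; apply: funext => n /=.
by rewrite modzMml mulrDl modzDm.
Qed.

HB.instance Definition _ (p : nat) :=
  GRing.Zmodule_isComPzRing.Build (Zpadic p) (@zp_mulA p) (@zp_mulC p)
    (@zp_mul1 p) (@zp_mulDl p).

(* x lies in p^n Z_p, i.e. |x|_p <= p^-n *)
Definition zp_in_pow (p : nat) (n : nat) (x : Zpadic p) : Prop := zp_seq x n = 0.

(* Rings of integers of finite extensions of Q_p (= the rings O_{F_v}).      *)
(* O is a domain, finite free as a Z_p-module, integrally closed in its      *)
(* fraction field.                                                           *)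

Definition padic_int_ring (p : nat) (O : idomainType) (iO : {rmorphism Zpadic p -> O}) :=
  (exists (k : nat) (e : 'I_k -> O),
      forall a : O, exists! c : 'I_k -> Zpadic p, a = \sum_(i < k) iO (c i) * e i)
  /\ (forall a b : O, b != 0 ->
        (exists (n : nat) (c : 'I_n -> O),
            a ^+ n + \sum_(i < n) c i * a ^+ i * b ^+ (n - i) = 0) ->
        exists q : O, a = q * b).

Definition in_ppow (O : comPzRingType) (p n : nat) (a : O) : Prop :=
  exists c : O, a = (p ^ n)%N%:R * c.

(* The torus T = prod_v Res_{O_v/Z_p} G_m^{d_v}; its Z_p-points are          *)
(* T_0 = prod_v (O_v^x)^{d_v}.                                               *)

Definition torus_pts (m : nat) (O : 'I_m -> idomainType) (d : 'I_m -> nat) : Type :=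
  forall v : 'I_m, 'I_(d v) -> O v.

Definition tmul (m : nat) (O : 'I_m -> idomainType) (d : 'I_m -> nat)
  (t t' : torus_pts O d) : torus_pts O d := fun v i => t v i * t' v i.

Definition in_T0 (m : nat) (O : 'I_m -> idomainType) (d : 'I_m -> nat)
  (t : torus_pts O d) : Prop := forall v i, t v i \is a GRing.unit.

Definition eps_p (p : nat) : nat := if p == 2%N then 2%N else 1%N.

(* T_eps = kernel of T(Z_p) -> T(Z/p^eps) *)
Definition in_Teps (p : nat) (m : nat) (O : 'I_m -> idomainType) (d : 'I_m -> nat)
  (t : torus_pts O d) : Prop :=
  in_T0 t /\ forall v i, in_ppow p (eps_p p) (t v i - 1).

Definition is_na_norm (A : comUnitRingType) (N : A -> Rdefinitions.R) : Prop :=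
  [/\ (forall x, 0 <= N x),
      (forall x, N x = 0 <-> x = 0),
      (forall x y, N (x + y) <= Num.max (N x) (N y)),
      (forall x, N (- x) = N x) /\
      (forall x y, N (x * y) <= N x * N y) & N 1 = 1].

Definition norm_complete (A : comUnitRingType) (N : A -> Rdefinitions.R) : Prop :=
  forall u : nat -> A,
    (forall e : Rdefinitions.R, 0 < e -> exists M : nat, forall m n : nat,
        (M <= m)%N -> (M <= n)%N -> N (u m - u n) < e) ->
    exists l : A, forall e : Rdefinitions.R, 0 < e -> exists M : nat, forall n : nat,
        (M <= n)%N -> N (u n - l) < e.

Definition mult_pseudo_unif (A : comUnitRingType) (N : A -> Rdefinitions.R) (w : A) : Prop :=
  [/\ w \is a GRing.unit, N w < 1 & (forall s, N (w * s) = N w * N s)].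

Definition zp_contractive (p : nat) (A : comUnitRingType) (N : A -> Rdefinitions.R)
  (iota : {rmorphism Zpadic p -> A}) : Prop :=
  forall (n : nat) (x : Zpadic p), zp_in_pow n x -> N (iota x) <= (p%:R : Rdefinitions.R) ^- n.

Definition banach_tate (p : nat) (A : comUnitRingType) (N : A -> Rdefinitions.R) (w : A)
  (iota : {rmorphism Zpadic p -> A}) : Prop :=
  [/\ is_na_norm N, norm_complete N, mult_pseudo_unif N w & zp_contractive N iota].

Definition bounded_equiv (A : Type) (N1 N2 : A -> Rdefinitions.R) : Prop :=
  exists C1 C2 : Rdefinitions.R, [/\ 0 < C1, 0 < C2 & (forall r, C1 * N1 r <= N2 r <= C2 * N1 r)].

Definition noetherian (A : comUnitRingType) : Prop :=
  forall I : A -> Prop,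
    I 0 -> (forall x y, I x -> I y -> I (x + y)) -> (forall a x, I x -> I (a * x)) ->
    exists (n : nat) (g : 'I_n -> A),
      forall x, I x <-> exists c : 'I_n -> A, x = \sum_(i < n) c i * g i.

Definition is_character (m : nat) (O : 'I_m -> idomainType) (d : 'I_m -> nat)
  (A : comUnitRingType) (kappa : torus_pts O d -> A) : Prop :=
  (forall t, in_T0 t -> kappa t \is a GRing.unit) /\
  (forall t t', in_T0 t -> in_T0 t' -> kappa (tmul t t') = kappa t * kappa t').

Definition char_continuous (p : nat) (m : nat) (O : 'I_m -> idomainType)
  (d : 'I_m -> nat) (A : comUnitRingType) (N : A -> Rdefinitions.R)
  (kappa : torus_pts O d -> A) : Prop :=
  forall t0, in_T0 t0 -> forall e : Rdefinitions.R, 0 < e -> exists n : nat,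
    forall t, in_T0 t -> (forall v i, in_ppow p n (t v i - t0 v i)) ->
      N (kappa t - kappa t0) < e.

(* The image K of T_0 under kappa is bounded: kappa is continuous, hence close to 1 on the
   kernel T_n of T_0 -> T(Z/p^n), and T_n has finitely many cosets, detected by the residues
   mod p^n of the Z_p-coordinates.  The seminorm |y|_K = sup_(k in K) |k y| is equivalent
   to |.|, and every kappa(t) acts on it with operator norm at most 1.
   For t in T_eps the elements kappa(t) - 1 need not be small, but any product of
   L0 = #(T_0 / T_n) * p^n of them acts with operator norm at most 1/2: up to errors of
   size 1/2 each factor depends only on the coset of t, so by pigeonhole the product contains
   a power (kappa(r) - 1)^(p^n), which is kappa(r^(p^n)) - 1 modulo p, and r^(p^n) lies in
   T_n.  Taking c < 1 with c^L0 >= 1/2, the seminorm sup_s c^-|s| |prod_(t in s) (kappa(t) - 1) y|_K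
   is still equivalent to |.|, and each kappa(t) - 1 contracts it by c.  The operator norm of
   this seminorm is the required norm, bounded-equivalent to |.| itself (s = 1). *)

From HB Require Import structures.
From mathcomp Require Import all_boot all_order all_algebra.
From Stdlib Require Rdefinitions.
From mathcomp Require Import boolp classical_sets reals Rstruct exp.
From mathcomp Require Import ring lra zify.

Set Implicit Arguments.
Unset Strict Implicit.
Unset Printing Implicit Defensive.
Import Order.TTheory GRing.Theory Num.Theory.
Local Open Scope ring_scope.
Local Notation R := Rdefinitions.R.

Section PadicIntegers.
Variable p : nat.
Hypothesis p_gt0 : (0 < p)%N.

Lemma zmodn_neq0 n : zmodn p n != 0.
Proof. by rewrite /zmodn eqz_nat -lt0n expn_gt0 p_gt0. Qed.

Lemma zp_seqD (x y : Zpadic p) n :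
  zp_seq (x + y) n = ((zp_seq x n + zp_seq y n) %% zmodn p n)%Z.
Proof. by []. Qed.

Lemma zp_seqN (x : Zpadic p) n : zp_seq (- x) n = ((- zp_seq x n) %% zmodn p n)%Z.
Proof. by []. Qed.

Lemma zp_seqB (x y : Zpadic p) n :
  zp_seq (x - y) n = ((zp_seq x n - zp_seq y n) %% zmodn p n)%Z.
Proof. by rewrite zp_seqD zp_seqN modzDmr. Qed.

Lemma zp_seq_natr k n : zp_seq (k%:R : Zpadic p) n = (k%:Z %% zmodn p n)%Z.
Proof.
elim: k => [|k IH]; first by rewrite /= mod0z.
by rewrite mulrS /= IH modzDm -addn1 PoszD addrC.
Qed.

Lemma zp_in_pow0 (x : Zpadic p) : zp_in_pow 0 x.
Proof. by rewrite /zp_in_pow -zp_red /zmodn expn0 modz1. Qed.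

Lemma zp_in_pow1_p : zp_in_pow 1 (p%:R : Zpadic p).
Proof. by rewrite /zp_in_pow zp_seq_natr /zmodn expn1 modzz. Qed.

Lemma zp_seq_mod (x : Zpadic p) a b : (b <= a)%N ->
  (zp_seq x a %% zmodn p b)%Z = zp_seq x b.
Proof.
move=> /subnK <-; elim: (a - b)%N => [|c IH]; first by rewrite add0n zp_red.
rewrite addSn -(@modz_dvdm _ _ (zmodn p (c + b))) ?zp_cohP //.
by rewrite /zmodn dvdzE /= dvdn_exp2l // leq_addl.
Qed.

(* The quotient is the coherent sequence (x_(a+n) / p^n)_a. *)
Lemma zp_in_powP (x : Zpadic p) n : zp_in_pow n x ->
  exists q : Zpadic p, x = (p ^ n)%N%:R * q.
Proof.
rewrite /zp_in_pow => x0.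
pose P := zmodn p n.
have dvdP a : (P %| zp_seq x (a + n))%Z.
  by apply/dvdz_mod0P; rewrite /P zp_seq_mod ?leq_addl.
pose f a := (zp_seq x (a + n) %/ P)%Z.
have fE a : f a * P = zp_seq x (a + n) by rewrite /f divzK.
have f_coh : zp_wcoh p f.
  move=> a; apply/eqP; rewrite eqz_mod_dvd.
  have : (zmodn p a * P %| (f a.+1 - f a) * P)%Z.
    rewrite mulrBl !fE /P /zmodn -PoszM -expnD -eqz_mod_dvd addSn.
    by rewrite -/(zmodn p (a + n)) zp_cohP zp_red.
  by rewrite dvdz_mul2r // zmodn_neq0.
exists (zp_mk f_coh); apply: zp_inj; apply: funext => a /=.
rewrite zp_seq_natr modzMm -/P.
have -> : ((Posz (p ^ n)%N) * f a)%Z = zp_seq x (a + n) by rewrite -fE mulrC.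
by rewrite zp_seq_mod ?leq_addr.
Qed.

End PadicIntegers.

Section PowerIdeal.
Variables (O : comPzRingType) (p : nat).

Lemma in_ppowD n (a b : O) : in_ppow p n a -> in_ppow p n b -> in_ppow p n (a + b).
Proof. by move=> [c ->] [c' ->]; exists (c + c'); rewrite mulrDr. Qed.

Lemma in_ppowMr n (a b : O) : in_ppow p n a -> in_ppow p n (a * b).
Proof. by move=> [c ->]; exists (c * b); rewrite mulrA. Qed.

Lemma in_ppowMl n (a b : O) : in_ppow p n b -> in_ppow p n (a * b).
Proof. by rewrite mulrC; apply: in_ppowMr. Qed.

Lemma in_ppow0 n : in_ppow p n (0 : O).
Proof. by exists 0; rewrite mulr0. Qed.

Lemma in_ppowW k n (a : O) : (k <= n)%N -> in_ppow p n a -> in_ppow p k a.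
Proof.
move=> /subnK <- [c ->]; exists ((p ^ (n - k))%N%:R * c).
by rewrite expnD natrM mulrA [_ * (p ^ k)%N%:R]mulrC.
Qed.

Lemma in_ppow_sum n (I : Type) (r : seq I) (F : I -> O) :
  (forall i, in_ppow p n (F i)) -> in_ppow p n (\sum_(i <- r) F i).
Proof.
move=> H; elim: r => [|x r IH]; first by rewrite big_nil; apply: in_ppow0.
by rewrite big_cons; apply: in_ppowD.
Qed.

Lemma in_ppow1_exprB1 (a : O) j : in_ppow p 1 (a - 1) -> in_ppow p 1 (a ^+ j - 1).
Proof. by move=> H; rewrite -(expr1n O j) subrXX; apply: in_ppowMr. Qed.

(* a^p - 1 = (a - 1) * (sum_(i < p) a^i) and the sum is p modulo p. *)
Lemma in_ppow_exprp e (a : O) : (0 < e)%N -> in_ppow p e (a - 1) ->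
  in_ppow p e.+1 (a ^+ p - 1).
Proof.
move=> e0 He.
have H1 : in_ppow p 1 (a - 1) by apply: in_ppowW He.
rewrite -(expr1n O p) subrXX.
set S := \sum_(_ < _) _.
have HS : in_ppow p 1 S.
  have -> : S = \sum_(i < p) (a ^+ (p.-1 - i) - 1) + p%:R.
    rewrite /S sumrB sumr_const card_ord subrK.
    by apply: eq_bigr => i _; rewrite expr1n mulr1.
  apply: in_ppowD; first by apply: in_ppow_sum => i; apply: in_ppow1_exprB1.
  by exists 1; rewrite expn1 mulr1.
case: He => c ->; case: HS => c' ->.
by exists (c * c'); rewrite expn1 expnSr natrM; ring.
Qed.

Lemma in_ppow_exprpX (a : O) j : in_ppow p 1 (a - 1) ->
  in_ppow p j.+1 (a ^+ (p ^ j) - 1).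
Proof.
move=> H; elim: j => [|j IH]; first by rewrite expn0 expr1.
by rewrite expnSr exprM; apply: in_ppow_exprp.
Qed.

End PowerIdeal.

Section SupImage.
Local Open Scope classical_set_scope.
Variables (T : Type) (P : set T) (f : T -> R).

Lemma sup_image_ub (M : R) x :
  (forall y, P y -> f y <= M) -> P x -> f x <= sup [set f y | y in P].
Proof.
move=> HM Px; apply: sup_upper_bound; last by exists x.
split; first by exists (f x), x.
by exists M => _ [y Py <-]; apply: HM.
Qed.

Lemma sup_image_le (M : R) :
  (exists x, P x) -> (forall y, P y -> f y <= M) -> sup [set f y | y in P] <= M.
Proof.
move=> [x Px] HM; apply: ge_sup; first by exists (f x), x.
by move=> _ [y Py <-]; apply: HM.
Qed.

End SupImage.

Section NaNorm.
Variables (A : comUnitRingType) (N : A -> R).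
Hypothesis HN : is_na_norm N.

Lemma na_norm_ge0 x : 0 <= N x. Proof. by case: HN. Qed.
Lemma na_norm_eq0 x : N x = 0 <-> x = 0. Proof. by case: HN. Qed.
Lemma na_norm0 : N 0 = 0. Proof. exact/na_norm_eq0. Qed.
Lemma na_normD x y : N (x + y) <= Num.max (N x) (N y). Proof. by case: HN. Qed.
Lemma na_normN x : N (- x) = N x. Proof. by case: HN => _ _ _ []. Qed.
Lemma na_normM x y : N (x * y) <= N x * N y. Proof. by case: HN => _ _ _ []. Qed.
Lemma na_norm1 : N 1 = 1. Proof. by case: HN. Qed.

Lemma na_normD_le x y M : N x <= M -> N y <= M -> N (x + y) <= M.
Proof. by move=> hx hy; apply: le_trans (na_normD x y) _; rewrite ge_max hx hy. Qed.

Lemma na_norm_gt0 x : x != 0 -> 0 < N x.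
Proof.
move=> x0; rewrite lt_neqAle na_norm_ge0 andbT; apply/eqP => /esym /na_norm_eq0 h.
by rewrite h eqxx in x0.
Qed.

End NaNorm.

Lemma sum_count_mem (G : finType) (s : seq G) : (\sum_(g : G) count_mem g s)%N = size s.
Proof.
elim: s => [|x s IH] /=; first by rewrite big1.
rewrite big_split /= IH (bigD1 x) //= eqxx big1 // => g /negbTE.
by rewrite eq_sym => ->.
Qed.

Lemma pigeonhole_count (G : finType) (s : seq G) M :
  (0 < size s)%N -> (#|G| * M <= size s)%N -> exists g, (M <= count_mem g s)%N.
Proof.
case: s => [|x s] // _ HM; case: M HM => [|M] HM; first by exists x.
apply: contrapT => noM.
have Hlt g : (count_mem g (x :: s) <= M)%N.
  by rewrite leqNgt; apply/negP => gM; apply: noM; exists g.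
have Hsize : (size (x :: s) <= #|G| * M)%N.
  rewrite -sum_count_mem; apply: leq_trans (leq_sum _ (fun g _ => Hlt g)) _.
  by rewrite sum_nat_const.
have G0 : (0 < #|G|)%N by apply/card_gt0P; exists x.
by move: HM Hsize; rewrite mulnS; lia.
Qed.

Lemma prod_count_mem (V : comPzRingType) (G : finType) (f : G -> V) (s : seq G) :
  \prod_(g <- s) f g = \prod_(g : G) f g ^+ count_mem g s.
Proof.
elim: s => [|x s IH]; first by rewrite big_nil big1 // => g _; rewrite expr0.
rewrite big_cons IH /=.
under [RHS]eq_bigr => g _ do rewrite exprD.
rewrite big_split /=; congr (_ * _).
rewrite (bigD1 x) //= eqxx expr1 big1 ?mulr1 // => g /negbTE.
by rewrite eq_sym => ->; rewrite expr0.
Qed.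

Lemma Forall_take (I : Type) (P : I -> Prop) n (s : seq I) :
  List.Forall P s -> List.Forall P (take n s).
Proof.
elim: s n => [|i s IH] [|n] H //=; inversion H; subst; constructor => //.
exact: IH.
Qed.

Lemma Forall_drop (I : Type) (P : I -> Prop) n (s : seq I) :
  List.Forall P s -> List.Forall P (drop n s).
Proof. by elim: s n => [|i s IH] [|n] H //=; inversion H; subst => //; apply: IH. Qed.

Section OrbitNorm.
Local Open Scope classical_set_scope.
Variables (A : comUnitRingType) (N : A -> R) (K : A -> Prop) (B : R).
Hypotheses (HN : is_na_norm N) (K1 : K 1) (KM : forall a b, K a -> K b -> K (a * b))
  (KB : forall a, K a -> N a <= B).

Definition orbit_norm (y : A) : R := sup [set N (k * y) | k in K].

Lemma orbit_norm_ub k y : K k -> N (k * y) <= orbit_norm y.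
Proof.
move=> Kk; apply: (@sup_image_ub _ K (fun k => N (k * y)) (B * N y)) => // k' Kk'.
apply: le_trans (na_normM HN _ _) _.
by apply: ler_wpM2r; [apply: na_norm_ge0|apply: KB].
Qed.

Lemma orbit_norm_le y M : (forall k, K k -> N (k * y) <= M) -> orbit_norm y <= M.
Proof. by move=> H; apply: sup_image_le => //; exists 1. Qed.

Lemma norm_le_orbit_norm y : N y <= orbit_norm y.
Proof. by rewrite -{1}(mul1r y); apply: orbit_norm_ub. Qed.

Lemma orbit_norm_ge0 y : 0 <= orbit_norm y.
Proof. exact: le_trans (na_norm_ge0 HN y) (norm_le_orbit_norm y). Qed.

Lemma orbit_norm_le_bound y : orbit_norm y <= B * N y.
Proof.
apply: orbit_norm_le => k Kk; apply: le_trans (na_normM HN _ _) _.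
by apply: ler_wpM2r; [apply: na_norm_ge0|apply: KB].
Qed.

Lemma orbit_normD u v : orbit_norm (u + v) <= Num.max (orbit_norm u) (orbit_norm v).
Proof.
apply: orbit_norm_le => k Kk; rewrite mulrDr; apply: le_trans (na_normD HN _ _) _.
by rewrite ge_max !le_max !orbit_norm_ub ?orbT.
Qed.

Lemma orbit_normN u : orbit_norm (- u) = orbit_norm u.
Proof.
apply/eqP; rewrite eq_le; apply/andP; split; apply: orbit_norm_le => k Kk.
  by rewrite mulrN (na_normN HN); apply: orbit_norm_ub.
by rewrite -(na_normN HN) -mulrN; apply: orbit_norm_ub.
Qed.

Lemma orbit_normZ w cw y : (forall s, N (w * s) = cw * N s) -> 0 < cw ->
  orbit_norm (w * y) = cw * orbit_norm y.
Proof.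
move=> Nw cw0; apply/eqP; rewrite eq_le; apply/andP; split.
  apply: orbit_norm_le => k Kk; rewrite mulrCA Nw; apply: ler_wpM2l; first exact: ltW.
  exact: orbit_norm_ub.
rewrite -ler_pdivlMl //; apply: orbit_norm_le => k Kk.
by rewrite ler_pdivlMl // -Nw mulrCA; apply: orbit_norm_ub.
Qed.

Definition op_le (a : A) (r : R) := forall z, orbit_norm (a * z) <= r * orbit_norm z.

Lemma op_le_norm a : op_le a (N a).
Proof.
move=> z; apply: orbit_norm_le => k Kk; rewrite mulrCA.
apply: le_trans (na_normM HN _ _) _.
by apply: ler_wpM2l; [apply: na_norm_ge0|apply: orbit_norm_ub].
Qed.

Lemma op_le_orbit k : K k -> op_le k 1.
Proof.
move=> Kk z; rewrite mul1r; apply: orbit_norm_le => k' Kk'.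
by rewrite mulrA; apply: orbit_norm_ub; apply: KM.
Qed.

Lemma op_le1 : op_le 1 1.
Proof. exact: op_le_orbit. Qed.

Lemma op_leW a r s : r <= s -> op_le a r -> op_le a s.
Proof.
move=> rs H z; apply: le_trans (H z) _.
by apply: ler_wpM2r => //; apply: orbit_norm_ge0.
Qed.

Lemma op_le_normW a r : N a <= r -> op_le a r.
Proof. by move=> Nar; apply: op_leW Nar (op_le_norm a). Qed.

Lemma op_le0 r : 0 <= r -> op_le 0 r.
Proof. by move=> r0; apply: op_le_normW; rewrite (na_norm0 HN). Qed.

Lemma op_leD a b r : op_le a r -> op_le b r -> op_le (a + b) r.
Proof.
move=> Ha Hb z; rewrite mulrDl; apply: le_trans (orbit_normD _ _) _.
by rewrite ge_max Ha Hb.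
Qed.

Lemma op_leN a r : op_le a r -> op_le (- a) r.
Proof. by move=> Ha z; rewrite mulNr orbit_normN. Qed.

Lemma op_leB a b r : op_le a r -> op_le b r -> op_le (a - b) r.
Proof. by move=> Ha Hb; apply: op_leD => //; apply: op_leN. Qed.

Lemma op_leM a b r s : 0 <= r -> op_le a r -> op_le b s -> op_le (a * b) (r * s).
Proof.
move=> r0 Ha Hb z; rewrite -mulrA; apply: le_trans (Ha _) _.
by rewrite -mulrA; apply: ler_wpM2l.
Qed.

Lemma op_leM1 a b : op_le a 1 -> op_le b 1 -> op_le (a * b) 1.
Proof. by move=> Ha Hb; rewrite -(mulr1 1); apply: op_leM. Qed.

Lemma op_leX a r n : 0 <= r -> op_le a r -> op_le (a ^+ n) (r ^+ n).
Proof.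
move=> r0 Ha; elim: n => [|n IH]; first by rewrite !expr0; apply: op_le1.
by rewrite !exprS; apply: op_leM.
Qed.

Lemma op_leX1 a n : op_le a 1 -> op_le (a ^+ n) 1.
Proof. by move=> Ha; rewrite -(expr1n R n); apply: op_leX. Qed.

Lemma op_le_sum1 (I : Type) (r : seq I) (F : I -> A) :
  (forall i, op_le (F i) 1) -> op_le (\sum_(i <- r) F i) 1.
Proof.
move=> H; elim: r => [|i r IH]; first by rewrite big_nil; apply: op_le0.
by rewrite big_cons; apply: op_leD.
Qed.

Lemma op_le_prod1 (I : Type) (P : I -> Prop) (x : I -> A) (s : seq I) :
  (forall i, P i -> op_le (x i) 1) -> List.Forall P s -> op_le (\prod_(i <- s) x i) 1.
Proof.
move=> H; elim: s => [|i s IH] Hs; first by rewrite big_nil; apply: op_le1.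
by inversion Hs; subst; rewrite big_cons; apply: op_leM1; [apply: H|apply: IH].
Qed.

Lemma op_le_perturb (I : Type) (P : I -> Prop) (a e : I -> A) (d : R) (s : seq I) :
  0 <= d <= 1 -> (forall i, P i -> op_le (a i) 1) -> (forall i, P i -> op_le (e i) d) ->
  List.Forall P s ->
  op_le (\prod_(i <- s) (a i + e i) - \prod_(i <- s) a i) d.
Proof.
move=> /andP[d0 d1] Ha He; elim: s => [|i s IH] Hs.
  by rewrite !big_nil subrr; apply: op_le0.
inversion Hs; subst; rewrite !big_cons.
set P1 := \prod_(_ <- _) (_ + _); set P0 := \prod_(_ <- _) _.
have -> : (a i + e i) * P1 - a i * P0 = a i * (P1 - P0) + e i * P1 by ring.
have HP1 : op_le P1 1.
  rewrite -[P1](subrK P0); apply: op_leD; first by apply: op_leW d1 _; apply: IH.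
  exact: op_le_prod1 Ha _.
apply: op_leD; first by rewrite -[d]mul1r; apply: op_leM => //; [apply: Ha|apply: IH].
by rewrite -[d]mulr1; apply: op_leM => //; apply: He.
Qed.

(* A long enough product of the [f g] contains some [f g ^+ M] as a factor. *)
Lemma op_le_prod_pigeon (G : finType) (f : G -> A) (M : nat) (r : R) (s : seq G) :
  0 <= r -> (forall g, op_le (f g) 1) -> (forall g, op_le (f g ^+ M) r) ->
  (0 < size s)%N -> (#|G| * M <= size s)%N -> op_le (\prod_(g <- s) f g) r.
Proof.
move=> r0 Hf HM s0 sM; have [g0 Hg0] := pigeonhole_count s0 sM.
rewrite prod_count_mem (bigD1 g0) //= -(subnKC Hg0) exprD.
have -> : r = r * 1 * 1 by rewrite !mulr1.
apply: op_leM; [by rewrite mulr1 | by apply: op_leM => //; apply: op_leX1 |].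
by rewrite -big_filter; apply: (@op_le_prod1 _ (fun _ => True)) => [g _|];
  [apply: op_leX1 | elim: (filter _ _) => [|g t IH]; constructor].
Qed.

Lemma op_le_prod_near (I : Type) (P : I -> Prop) (x : I -> A) (G : finType)
  (f : G -> A) (gs : I -> G) (M : nat) (r : R) (s : seq I) :
  0 <= r <= 1 -> (forall g, op_le (f g) 1) -> (forall g, op_le (f g ^+ M) r) ->
  (forall i, P i -> op_le (x i - f (gs i)) r) -> List.Forall P s ->
  (0 < size s)%N -> (#|G| * M <= size s)%N -> op_le (\prod_(i <- s) x i) r.
Proof.
move=> /andP[r0 r1] Hf HM He Hs s0 sM.
have -> : \prod_(i <- s) x i = \prod_(g <- map gs s) f g +
   (\prod_(i <- s) (f (gs i) + (x i - f (gs i))) - \prod_(i <- s) f (gs i)).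
  under [X in _ = _ + (X - _)]eq_bigr => i _ do rewrite addrC subrK.
  by rewrite big_map addrC subrK.
apply: op_leD; first by apply: op_le_prod_pigeon => //; rewrite size_map.
by apply: (op_le_perturb (P := P)) => //; rewrite r0 r1.
Qed.

Lemma op_le_prod_blocks (I : Type) (P : I -> Prop) (x : I -> A) (c : R) (L0 : nat) :
  0 < c <= 1 -> (0 < L0)%N -> (forall i, P i -> op_le (x i) 1) ->
  (forall s, List.Forall P s -> size s = L0 -> op_le (\prod_(i <- s) x i) (c ^+ L0)) ->
  forall s, List.Forall P s -> op_le (\prod_(i <- s) x i) (c ^+ size s / c ^+ L0).
Proof.
move=> /andP[c0 c1] L0_gt0 Hx Hblock s.
have cL0 : 0 < c ^+ L0 by apply: exprn_gt0.
move: {2}(size s) (leqnn (size s)) => n; elim: n s => [|n IH] s Hn Hs.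
  move: Hn; rewrite leqn0 => /nilP ->.
  by rewrite big_nil expr0 mul1r; apply: op_le_normW; rewrite na_norm1 // invf_ge1 // exprn_ile1 // ltW.
have [Hlt|Hge] := ltnP (size s) L0.
  apply: op_leW (op_le_prod1 Hx Hs).
  by rewrite ler_pdivlMr // mul1r; apply: ler_wiXn2l => //; [exact: ltW|exact: ltnW].
rewrite -(cat_take_drop L0 s) big_cat /= size_cat size_takel // size_drop.
rewrite exprD -mulrA; apply: op_leM; first exact: ltW.
  by apply: Hblock; [exact: Forall_take|rewrite size_takel].
have := IH (drop L0 s); rewrite size_drop; apply; last exact: Forall_drop.
by move: Hn L0_gt0; lia.
Qed.

Section Frobenius.
Variable p : nat.
Hypotheses (p_prime : prime p) (op_le_natr : forall k : nat, op_le k%:R 1).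

Lemma op_le_expr_congr a b k : op_le a 1 -> op_le b 1 ->
  exists r, op_le r 1 /\ (a + p%:R * b) ^+ k = a ^+ k + p%:R * r.
Proof.
move=> Ha Hb; elim: k => [|k [r [Hr Er]]].
  by exists 0; split; [apply: op_le0|rewrite !expr0 mulr0 addr0].
exists (a * r + b * a ^+ k + p%:R * b * r); split.
  by do 2?apply: op_leD; do ?apply: op_leM1 => //; apply: op_leX1.
by rewrite exprS Er exprS; ring.
Qed.

Lemma op_le_frobenius z : op_le z 1 ->
  exists r, op_le r 1 /\ (1 + z) ^+ p = 1 + z ^+ p + p%:R * r.
Proof.
move=> Hz; have [p' Ep] : exists p', p = p'.+2.
  by case: p p_prime => [|[|p']] //; exists p'.
rewrite addrC exprD1n Ep big_ord_recr /= big_ord_recl /=.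
rewrite expr0 bin0 binn mulr1n mulr1n -Ep.
pose r := \sum_(i < p'.+1) z ^+ i.+1 *+ ('C(p, i.+1) %/ p).
exists r; split.
  by apply: op_le_sum1 => i; rewrite -mulr_natr; apply: op_leM1 => //; apply: op_leX1.
rewrite /r mulr_sumr [RHS]addrAC; congr (_ + _ + _).
apply: eq_bigr => i _; rewrite /bump add1n mulr_natl -mulrnA divnK //.
by apply: prime_dvd_bin => //; rewrite Ep /= ltnS; exact: ltn_ord.
Qed.

Lemma op_le_frobeniusX y j : op_le y 1 ->
  exists q, op_le q 1 /\ (1 + y) ^+ (p ^ j) = 1 + y ^+ (p ^ j) + p%:R * q.
Proof.
move=> Hy; elim: j => [|j [q [Hq E]]].
  by exists 0; split; [apply: op_le0|rewrite expn0 !expr1 mulr0 addr0].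
have Hyj : op_le (y ^+ (p ^ j)) 1 by apply: op_leX1.
have [r1 [Hr1 E1]] := op_le_expr_congr p (op_leD op_le1 Hyj) Hq.
have [r2 [Hr2 E2]] := op_le_frobenius Hyj.
exists (r2 + r1); split; first exact: op_leD.
by rewrite expnSr exprM E E1 E2 -exprM mulrDr addrA.
Qed.

End Frobenius.

Section ContractingNorm.
Variables (I : Type) (P : I -> Prop) (x : I -> A) (c : R) (L0 : nat).
Hypotheses (c_gt0 : 0 < c) (c_lt1 : c < 1) (L0_gt0 : (0 < L0)%N)
  (op_le_x : forall i, P i -> op_le (x i) 1)
  (op_le_block : forall s, List.Forall P s -> size s = L0 ->
     op_le (\prod_(i <- s) x i) (c ^+ L0)).

Let op_le_prod s : List.Forall P s -> op_le (\prod_(i <- s) x i) (c ^+ size s / c ^+ L0).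
Proof. by apply: op_le_prod_blocks; rewrite ?c_gt0 ?ltW. Qed.

(* Weighting by [c ^- size s] makes each [x i] a contraction by [c]. *)
Definition contract_norm (y : A) : R :=
  sup [set c ^- size s * orbit_norm (\prod_(i <- s) x i * y) | s in List.Forall P].

Let cX_gt0 n : 0 < c ^+ n. Proof. exact: exprn_gt0. Qed.
Let cVX_ge0 n : 0 <= c ^- n. Proof. by rewrite invr_ge0 ltW. Qed.

Lemma contract_norm_term_le s y : List.Forall P s ->
  c ^- size s * orbit_norm (\prod_(i <- s) x i * y) <= orbit_norm y / c ^+ L0.
Proof.
move=> Hs; apply: le_trans (_ : c ^- size s * (c ^+ size s / c ^+ L0 * orbit_norm y) <= _).
  by apply: ler_wpM2l => //; exact: (op_le_prod Hs y).
by rewrite mulrA mulrA mulVf ?(lt0r_neq0 (cX_gt0 _)) // mul1r mulrC.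
Qed.

Lemma contract_norm_ub s y : List.Forall P s ->
  c ^- size s * orbit_norm (\prod_(i <- s) x i * y) <= contract_norm y.
Proof.
move=> Hs; apply: (@sup_image_ub _ _
  (fun s => c ^- size s * orbit_norm (\prod_(i <- s) x i * y)) (orbit_norm y / c ^+ L0)) => //.
by move=> s' Hs'; apply: contract_norm_term_le.
Qed.

Lemma contract_norm_le y M : (forall s, List.Forall P s ->
  c ^- size s * orbit_norm (\prod_(i <- s) x i * y) <= M) -> contract_norm y <= M.
Proof. by move=> H; apply: sup_image_le => //; exists [::]; constructor. Qed.

Lemma orbit_norm_le_contract y : orbit_norm y <= contract_norm y.
Proof.
have := @contract_norm_ub [::] y (List.Forall_nil _).
by rewrite big_nil mul1r expr0 invr1 mul1r.
Qed.

Lemma contract_norm_ge0 y : 0 <= contract_norm y.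
Proof. exact: le_trans (orbit_norm_ge0 y) (orbit_norm_le_contract y). Qed.

Lemma contract_norm_gt0 z : z != 0 -> 0 < contract_norm z.
Proof.
move=> z0; apply: lt_le_trans (orbit_norm_le_contract z).
exact: lt_le_trans (na_norm_gt0 HN z0) (norm_le_orbit_norm z).
Qed.

Lemma contract_norm0 : contract_norm 0 = 0.
Proof.
apply/eqP; rewrite eq_le contract_norm_ge0 andbT.
apply: contract_norm_le => s Hs; apply: le_trans (contract_norm_term_le _ Hs) _.
rewrite pmulr_lle0 ?invr_gt0 //; apply: le_trans (orbit_norm_le_bound 0) _.
by rewrite (na_norm0 HN) mulr0.
Qed.

Lemma contract_norm_op a r y : 0 <= r -> op_le a r -> contract_norm (a * y) <= r * contract_norm y.
Proof.
move=> r0 Ha; apply: contract_norm_le => s Hs; rewrite mulrCA.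
apply: le_trans (_ : c ^- size s * (r * orbit_norm (\prod_(i <- s) x i * y)) <= _).
  by apply: ler_wpM2l => //; exact: Ha.
by rewrite mulrCA; apply: ler_wpM2l => //; apply: contract_norm_ub.
Qed.

Lemma contract_normD u v :
  contract_norm (u + v) <= Num.max (contract_norm u) (contract_norm v).
Proof.
apply: contract_norm_le => s Hs; rewrite mulrDr.
apply: le_trans (_ : c ^- size s * Num.max (orbit_norm (\prod_(i <- s) x i * u))
   (orbit_norm (\prod_(i <- s) x i * v)) <= _).
  by apply: ler_wpM2l => //; apply: orbit_normD.
by rewrite maxr_pMr // ge_max !le_max !contract_norm_ub ?orbT.
Qed.

Lemma contract_normN u : contract_norm (- u) = contract_norm u.
Proof.
apply/eqP; rewrite eq_le; apply/andP; split; apply: contract_norm_le => s Hs.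
  by rewrite mulrN orbit_normN; apply: contract_norm_ub.
by rewrite -orbit_normN -mulrN; apply: contract_norm_ub.
Qed.

Lemma contract_norm_x i y : P i -> contract_norm (x i * y) <= c * contract_norm y.
Proof.
move=> Pi; apply: contract_norm_le => s Hs.
have := @contract_norm_ub (i :: s) y (List.Forall_cons _ Pi Hs).
rewrite big_cons /= exprS invfM => h.
rewrite -[X in X <= _](mulVKf (lt0r_neq0 c_gt0)); apply: ler_wpM2l; first exact: ltW.
by apply: le_trans h; rewrite mulrA [_ * x i]mulrC mulrA.
Qed.

Lemma contract_normZ w cw y : (forall s, N (w * s) = cw * N s) -> 0 < cw ->
  contract_norm (w * y) = cw * contract_norm y.
Proof.
move=> Nw cw0; apply/eqP; rewrite eq_le; apply/andP; split.
  apply: contract_norm_le => s Hs; rewrite mulrCA (orbit_normZ _ Nw cw0) mulrCA.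
  by apply: ler_wpM2l; [exact: ltW|apply: contract_norm_ub].
rewrite -ler_pdivlMl //; apply: contract_norm_le => s Hs.
rewrite ler_pdivlMl // mulrCA -(orbit_normZ _ Nw cw0) mulrCA.
exact: contract_norm_ub.
Qed.

Definition op_norm (a : A) : R :=
  sup [set contract_norm (a * z) / contract_norm z | z in (fun z : A => z != 0)].

Lemma op_norm_ub a z : z != 0 -> contract_norm (a * z) / contract_norm z <= op_norm a.
Proof.
move=> z0; apply: (@sup_image_ub _ _ (fun z => contract_norm (a * z) / contract_norm z) (N a)) => //.
move=> y y0; rewrite ler_pdivrMr ?contract_norm_gt0 //.
by apply: contract_norm_op; [apply: na_norm_ge0|apply: op_le_norm].
Qed.

Lemma op_norm_le a M :
  (forall z, z != 0 -> contract_norm (a * z) <= M * contract_norm z) -> op_norm a <= M.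
Proof.
move=> H; apply: sup_image_le; first by exists 1; apply: oner_neq0.
by move=> z z0; rewrite ler_pdivrMr ?contract_norm_gt0 //; apply: H.
Qed.

Lemma op_norm_op a r : 0 <= r -> op_le a r -> op_norm a <= r.
Proof. by move=> r0 Ha; apply: op_norm_le => z _; apply: contract_norm_op. Qed.

Lemma op_norm_le_norm a : op_norm a <= N a.
Proof. by apply: op_norm_op; [apply: na_norm_ge0|apply: op_le_norm]. Qed.

Lemma contract_norm_div1_le a : contract_norm a / contract_norm 1 <= op_norm a.
Proof. by have := op_norm_ub a (oner_neq0 A); rewrite mulr1. Qed.

Lemma norm_div_le_op_norm a : N a / contract_norm 1 <= op_norm a.
Proof.
apply: le_trans (contract_norm_div1_le a).
rewrite ler_pM2r ?invr_gt0 ?contract_norm_gt0 ?oner_neq0 //.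
exact: le_trans (norm_le_orbit_norm a) (orbit_norm_le_contract a).
Qed.

Lemma op_norm_mul_le a z : contract_norm (a * z) <= op_norm a * contract_norm z.
Proof.
have [->|z0] := eqVneq z 0; first by rewrite mulr0 contract_norm0 mulr0.
by rewrite -ler_pdivrMr ?contract_norm_gt0 //; apply: op_norm_ub.
Qed.

Lemma op_norm_ge0 a : 0 <= op_norm a.
Proof.
apply: le_trans (norm_div_le_op_norm a).
by apply: divr_ge0; [exact: na_norm_ge0|exact: contract_norm_ge0].
Qed.

Lemma op_normZ w cw a : (forall s, N (w * s) = cw * N s) -> 0 < cw ->
  op_norm (w * a) = cw * op_norm a.
Proof.
move=> Nw cw0; apply/eqP; rewrite eq_le; apply/andP; split.
  apply: op_norm_le => z _; rewrite -mulrA (contract_normZ _ Nw cw0) -mulrA.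
  by apply: ler_wpM2l; [exact: ltW|apply: op_norm_mul_le].
rewrite -ler_pdivlMl //; apply: op_norm_le => z _.
rewrite -mulrA ler_pdivlMl // -(contract_normZ _ Nw cw0) mulrA.
exact: op_norm_mul_le.
Qed.

Lemma op_norm_is_na_norm : is_na_norm op_norm.
Proof.
split.
- exact: op_norm_ge0.
- move=> a; split=> [Na0|->]; last first.
    by apply/eqP; rewrite eq_le op_norm_ge0 andbT -(na_norm0 HN) op_norm_le_norm.
  apply/(na_norm_eq0 HN)/eqP; rewrite eq_le na_norm_ge0 // andbT.
  have := norm_div_le_op_norm a; rewrite Na0 pmulr_lle0 // invr_gt0.
  exact/contract_norm_gt0/oner_neq0.
- move=> a b; apply: op_norm_le => z _; rewrite mulrDl; apply: le_trans (contract_normD _ _) _.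
  by rewrite maxr_pMl ?contract_norm_ge0 // ge_max !le_max !op_norm_mul_le orbT.
- split=> [a|a b].
    apply/eqP; rewrite eq_le; apply/andP; split; apply: op_norm_le => z _.
      by rewrite mulNr contract_normN; apply: op_norm_mul_le.
    by rewrite -contract_normN -mulNr; apply: op_norm_mul_le.
  apply: op_norm_le => z _; rewrite -mulrA; apply: le_trans (op_norm_mul_le _ _) _.
  by rewrite -mulrA; apply: ler_wpM2l; [apply: op_norm_ge0|apply: op_norm_mul_le].
- apply/eqP; rewrite eq_le; apply/andP; split; first exact: op_norm_op op_le1.
  by have := contract_norm_div1_le 1; rewrite divff // lt0r_neq0 // contract_norm_gt0 ?oner_neq0.
Qed.

Lemma exists_contracting_norm :
  exists N' : A -> R, [/\ is_na_norm N',
    exists2 C, 0 < C & forall a, C * N a <= N' a <= N a,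
    (forall w cw, (forall s, N (w * s) = cw * N s) -> 0 < cw ->
       forall a, N' (w * a) = cw * N' a),
    (forall k, K k -> N' k <= 1) & forall i, P i -> N' (x i) <= c].
Proof.
exists op_norm; split.
- exact: op_norm_is_na_norm.
- exists (contract_norm 1)^-1; first by rewrite invr_gt0 contract_norm_gt0 ?oner_neq0.
  by move=> a; rewrite op_norm_le_norm andbT mulrC norm_div_le_op_norm.
- by move=> w cw Nw cw0 a; apply: op_normZ.
- by move=> k Kk; apply: op_norm_op ler01 (op_le_orbit Kk).
- by move=> i Pi; apply: op_norm_le => z _; apply: contract_norm_x.
Qed.

End ContractingNorm.

End OrbitNorm.

Lemma exists_representatives (T : Type) (S : finType) (Q : T -> Prop) (res : T -> S) t0 :
  Q t0 -> exists rep : S -> T,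
    (forall g, Q (rep g)) /\ forall t, Q t -> res (rep (res t)) = res t.
Proof.
move=> Qt0; have reps g : exists r,
    Q r /\ ((exists t, Q t /\ res t = g) -> res r = g).
  have [[t [Qt <-]]|noT] := pselect (exists t, Q t /\ res t = g); first by exists t.
  by exists t0; split=> // /noT.
have [rep Hrep] := choice reps.
by exists rep; split=> [g|t Qt]; [case: (Hrep g)|apply: (proj2 (Hrep _)); exists t].
Qed.

Section PadicCoordinates.
Variables (p : nat) (O : idomainType) (iO : {rmorphism Zpadic p -> O}).
Hypothesis HO : padic_int_ring iO.

Lemma padic_int_ring_coord : {k : nat & {e : 'I_k -> O & {co : O -> 'I_k -> Zpadic p |
  forall a, a = \sum_(j < k) iO (co a j) * e j}}}.
Proof.
have [k Hk] := cid (proj1 HO); have [e He] := cid Hk.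
have coords a : exists c : 'I_k -> Zpadic p, a = \sum_(j < k) iO (c j) * e j.
  by have [c [Hc _]] := He a; exists c.
have [co Hco] := choice coords.
by exists k, e, co.
Qed.

End PadicCoordinates.

Section TorusResidue.
Variables (p m : nat) (O : 'I_m -> idomainType)
  (iO : forall v, {rmorphism Zpadic p -> O v}) (d : 'I_m -> nat).
Hypothesis p_gt0 : (0 < p)%N.

Section Coordinates.
Variables (k : 'I_m -> nat) (e : forall v, 'I_(k v) -> O v)
  (co : forall v, O v -> 'I_(k v) -> Zpadic p).
Hypothesis co_sum : forall v a, a = \sum_(j < k v) iO v (co a j) * e j.
Variable n : nat.

Definition coord_index := {v : 'I_m & {i : 'I_(d v) & 'I_(k v)}}.

Definition coord_residue (t : torus_pts O d) : {ffun coord_index -> 'I_(p ^ n).+1} :=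
  [ffun s => inord (absz (zp_seq (co (t (tag s) (tag (tagged s)))
                                     (tagged (tagged s))) n))].

Lemma zp_seq_bounds (x : Zpadic p) : (0 <= zp_seq x n < zmodn p n)%R.
Proof.
rewrite -zp_red modz_ge0 ?zmodn_neq0 //=.
by rewrite ltz_pmod // lt_neqAle eq_sym zmodn_neq0.
Qed.

Lemma zp_seq_inordK (x : Zpadic p) :
  nat_of_ord (inord (absz (zp_seq x n)) : 'I_(p ^ n).+1) = absz (zp_seq x n).
Proof.
apply: inordK; case/andP: (zp_seq_bounds x) => x0; rewrite -(gez0_abs x0) /zmodn.
by rewrite ltz_nat ltnS => /ltnW.
Qed.

Lemma coord_residue_congr t t' : coord_residue t = coord_residue t' ->
  forall v i, in_ppow p n (t v i - t' v i).
Proof.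
move=> E v i.
have Ej j : zp_seq (co (t v i) j) n = zp_seq (co (t' v i) j) n.
  have := congr1 (fun f : {ffun coord_index -> 'I_(p ^ n).+1} =>
    val (f (existT _ v (existT _ i j)))) E.
  rewrite !ffunE /= !zp_seq_inordK => /(congr1 Posz).
  case/andP: (zp_seq_bounds (co (t v i) j)) => ge0t _.
  by case/andP: (zp_seq_bounds (co (t' v i) j)) => ge0t' _; rewrite !gez0_abs.
rewrite [t v i]co_sum [t' v i]co_sum -sumrB; apply: in_ppow_sum => j.
rewrite -mulrBl -rmorphB; apply: in_ppowMr.
have [q ->] : exists q, co (t v i) j - co (t' v i) j = (p ^ n)%N%:R * q.
  by apply: zp_in_powP => //; rewrite /zp_in_pow zp_seqB Ej subrr mod0z.
by rewrite rmorphM rmorph_nat; exists (iO v q).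
Qed.

End Coordinates.

Lemma torus_residue_finite (HO : forall v, padic_int_ring (iO v)) n :
  exists (S : finType) (res : torus_pts O d -> S),
    forall t t', res t = res t' -> forall v i, in_ppow p n (t v i - t' v i).
Proof.
pose cv v := padic_int_ring_coord (HO v).
pose co v : O v -> 'I_(projT1 (cv v)) -> Zpadic p := sval (projT2 (projT2 (cv v))).
have co_sum v a : a = \sum_(j < projT1 (cv v)) iO v (co v a j) * projT1 (projT2 (cv v)) j.
  exact: (svalP (projT2 (projT2 (cv v)))).
exists _, (coord_residue co n).
exact: (@coord_residue_congr _ (fun v => projT1 (projT2 (cv v))) co co_sum n).
Qed.

End TorusResidue.

Section TorusGroup.
Variables (m : nat) (O : 'I_m -> idomainType) (d : 'I_m -> nat).
Implicit Types t r : torus_pts O d.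

Definition tone : torus_pts O d := fun v i => 1.
Definition tinv t : torus_pts O d := fun v i => (t v i)^-1.
Definition tpow t (k : nat) : torus_pts O d := fun v i => t v i ^+ k.

Lemma torus_ext t t' : (forall v i, t v i = t' v i) -> t = t'.
Proof. by move=> E; apply: functional_extensionality_dep => v; apply: funext => i. Qed.

Lemma in_T0_one : in_T0 tone.
Proof. by move=> v i; apply: unitr1. Qed.

Lemma in_T0_mul t t' : in_T0 t -> in_T0 t' -> in_T0 (tmul t t').
Proof. by move=> Ht Ht' v i; rewrite /tmul unitrM; apply/andP; split; [apply: Ht|apply: Ht']. Qed.

Lemma in_T0_inv t : in_T0 t -> in_T0 (tinv t).
Proof. by move=> Ht v i; rewrite /tinv unitrV; apply: Ht. Qed.

Lemma in_T0_pow t k : in_T0 t -> in_T0 (tpow t k).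
Proof. by move=> Ht v i; rewrite /tpow unitrX //; apply: Ht. Qed.

Lemma in_T0_invM r t : in_T0 r -> in_T0 t -> in_T0 (tmul (tinv r) t).
Proof. by move=> Hr Ht; apply: in_T0_mul => //; apply: in_T0_inv. Qed.

Lemma in_Teps_one p : in_Teps p tone.
Proof. by split=> [|v i]; [exact: in_T0_one|rewrite subrr; exact: in_ppow0]. Qed.

Lemma tmulKV r t : in_T0 r -> tmul r (tmul (tinv r) t) = t.
Proof. by move=> Hr; apply: torus_ext => v i; rewrite /tmul /tinv mulVKr //; apply: Hr. Qed.

Lemma tmul1 t : tmul tone t = t.
Proof. by apply: torus_ext => v i; rewrite /tmul /tone mul1r. Qed.

Lemma tpowS t k : tpow t k.+1 = tmul t (tpow t k).
Proof. by apply: torus_ext => v i; rewrite /tmul /tpow exprS. Qed.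

Lemma tpow0 t : tpow t 0 = tone.
Proof. by apply: torus_ext => v i; rewrite /tpow expr0. Qed.

Lemma in_ppow_tinvM_sub1 p n r t v i : in_T0 r -> in_ppow p n (t v i - r v i) ->
  in_ppow p n ((tmul (tinv r) t : torus_pts O d) v i - 1).
Proof.
move=> Hr Hrt; have -> : (tmul (tinv r) t : torus_pts O d) v i - 1
    = (r v i)^-1 * (t v i - r v i) by rewrite /tmul /tinv mulrBr mulVr //; apply: Hr.
exact: in_ppowMl.
Qed.

Variables (A : comUnitRingType) (kappa : torus_pts O d -> A).
Hypothesis Hk : is_character kappa.

Lemma kappa1 : kappa tone = 1.
Proof.
case: Hk => Hu Hm; have := Hm _ _ in_T0_one in_T0_one; rewrite tmul1 => E.
by apply: (mulIr (Hu _ in_T0_one)); rewrite mul1r -E.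
Qed.

Lemma kappa_pow t k : in_T0 t -> kappa (tpow t k) = kappa t ^+ k.
Proof.
move=> Ht; elim: k => [|k IH]; first by rewrite tpow0 kappa1 expr0.
by rewrite tpowS (proj2 Hk) ?IH ?exprS //; apply: in_T0_pow.
Qed.

Lemma kappa_split r t : in_T0 r -> in_T0 t -> kappa t = kappa r * kappa (tmul (tinv r) t).
Proof. by move=> Hr Ht; rewrite -(proj2 Hk) ?tmulKV //; apply: in_T0_invM. Qed.

End TorusGroup.

Arguments tone {m O d}.
Arguments in_T0_one {m O d}.
Arguments in_Teps_one {m O d}.

Section Character.
Variables (p m : nat) (O : 'I_m -> idomainType) (d : 'I_m -> nat)
  (A : comUnitRingType) (N : A -> R) (iota : {rmorphism Zpadic p -> A})
  (kappa : torus_pts O d -> A).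
Hypotheses (p_prime : prime p) (HN : is_na_norm N) (N_iota : zp_contractive N iota)
  (Hk : is_character kappa) (kappa_cont : char_continuous p N kappa).

Definition char_image (a : A) : Prop := exists t, in_T0 t /\ a = kappa t.

Lemma char_image1 : char_image 1.
Proof. by exists tone; rewrite kappa1 //; split=> //; apply: in_T0_one. Qed.

Lemma char_imageM a b : char_image a -> char_image b -> char_image (a * b).
Proof.
move=> [t [Ht ->]] [t' [Ht' ->]]; exists (tmul t t').
by split; [apply: in_T0_mul | rewrite (proj2 Hk)].
Qed.

Lemma char_near1 : exists n, forall t, in_T0 t ->
  (forall v i, in_ppow p n (t v i - 1)) -> N (kappa t - 1) < 1 / 2.
Proof.
have half_gt0 : 0 < 1 / 2 :> R by lra.
have [n Hn] := kappa_cont in_T0_one half_gt0.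
by exists n => t Ht Ht1; rewrite -(kappa1 Hk); apply: Hn.
Qed.

Section Residues.
Variables (n : nat) (S : finType) (res : torus_pts O d -> S).
Hypotheses (near1 : forall t, in_T0 t ->
    (forall v i, in_ppow p n (t v i - 1)) -> N (kappa t - 1) < 1 / 2)
  (res_congr : forall t t', res t = res t' -> forall v i, in_ppow p n (t v i - t' v i)).

Lemma char_near_residue r t : in_T0 r -> in_T0 t -> res r = res t ->
  N (kappa (tmul (tinv r) t) - 1) < 1 / 2.
Proof.
move=> Hr Ht Hrt; apply: near1; first exact: in_T0_invM.
by move=> v i; apply: in_ppow_tinvM_sub1 => //; apply: res_congr.
Qed.

(* [kappa t] is [kappa r], for one of finitely many representatives [r], times an element of norm 1. *)
Lemma char_image_bounded : exists B, forall a, char_image a -> N a <= B.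
Proof.
have [rep [rep_T0 rep_res]] := exists_representatives res in_T0_one.
exists (\sum_(g : S) N (kappa (rep g))) => _ [t [Ht ->]].
set r := rep (res t); have Hr : in_T0 r by apply: rep_T0.
rewrite (kappa_split Hk Hr Ht); apply: le_trans (na_normM HN _ _) _.
have N1 : N (kappa (tmul (tinv r) t)) <= 1.
  rewrite -[kappa _](subrK 1); apply: na_normD_le; rewrite ?na_norm1 //.
  by apply/ltW/(lt_le_trans (char_near_residue Hr Ht (rep_res t Ht))); lra.
apply: le_trans (_ : N (kappa r) * 1 <= _); first by apply: ler_wpM2l => //; apply: na_norm_ge0.
rewrite mulr1 (bigD1 (res t)) //= lerDl.
by apply: sumr_ge0 => g _; apply: na_norm_ge0.
Qed.

Section BlockContraction.
Variable B : R.
Hypothesis char_image_le : forall a, char_image a -> N a <= B.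
Local Notation op_le := (op_le N char_image).

Lemma op_le_natr k : op_le k%:R 1.
Proof.
apply: (op_le_normW HN char_image1 char_image_le).
by have := N_iota (zp_in_pow0 (k%:R : Zpadic p)); rewrite rmorph_nat expr0 invr1.
Qed.

Lemma op_le_p : op_le p%:R (1 / 2).
Proof.
apply: (op_le_normW HN char_image1 char_image_le).
have := N_iota (zp_in_pow1_p p); rewrite rmorph_nat expr1 => /le_trans; apply.
have p2 : 2 <= p%:R :> R by rewrite (ler_nat _ 2 p) prime_gt1.
by rewrite mul1r lef_pV2 ?posrE //; lra.
Qed.

Lemma op_le_char t : in_T0 t -> op_le (kappa t) 1.
Proof. by move=> Ht; apply: (op_le_orbit HN char_image1 char_imageM char_image_le); exists t. Qed.

Lemma op_le_char_sub1 t : in_T0 t -> op_le (kappa t - 1) 1.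
Proof.
by move=> Ht; apply: (op_leB HN char_image1 char_image_le (op_le_char Ht));
  apply: (op_le1 HN char_image1 char_imageM char_image_le).
Qed.

Lemma op_le_char_near1 t : in_T0 t -> N (kappa t - 1) < 1 / 2 -> op_le (kappa t - 1) (1 / 2).
Proof. by move=> Ht /ltW; apply: (op_le_normW HN char_image1 char_image_le). Qed.

(* (kappa r - 1)^(p^n) = kappa (r^(p^n)) - 1 mod p, and r^(p^n) = 1 mod p^(n+1). *)
Lemma op_le_char_sub1_expn r : in_Teps p r -> op_le ((kappa r - 1) ^+ (p ^ n)) (1 / 2).
Proof.
move=> [Hr Hr1].
have [q [Hq E]] := op_le_frobeniusX HN char_image1 char_imageM char_image_le
  p_prime op_le_natr n (op_le_char_sub1 Hr).
have -> : (kappa r - 1) ^+ (p ^ n) = (kappa (tpow r (p ^ n)) - 1) - p%:R * q.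
  by rewrite (kappa_pow Hk _ Hr); move: E; rewrite addrC subrK => ->; ring.
have Hpow : in_T0 (tpow r (p ^ n)) by apply: in_T0_pow.
apply: (op_leB HN char_image1 char_image_le).
  apply: op_le_char_near1 => //; apply: near1 => // v i.
  apply: (@in_ppowW _ p n n.+1) => //; apply: in_ppow_exprpX.
  apply: (@in_ppowW _ p 1 (eps_p p)); last exact: Hr1.
  by rewrite /eps_p; case: (p == 2%N).
rewrite -[1 / 2]mulr1; apply: op_leM Hq => //; first lra.
exact: op_le_p.
Qed.

Lemma op_le_char_sub1_residue r t : in_T0 r -> in_T0 t -> res r = res t ->
  op_le ((kappa t - 1) - (kappa r - 1)) (1 / 2).
Proof.
move=> Hr Ht Hrt.
have -> : kappa t - 1 - (kappa r - 1) = kappa r * (kappa (tmul (tinv r) t) - 1).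
  by rewrite {1}(kappa_split Hk Hr Ht); ring.
rewrite -[1 / 2]mul1r; apply: op_leM (op_le_char Hr) _ => //.
by apply: op_le_char_near1; [apply: in_T0_invM|apply: char_near_residue].
Qed.

Lemma char_sub1_block_contracts : exists2 L0, (0 < L0)%N &
  forall s, List.Forall (@in_Teps p m O d) s -> size s = L0 ->
    op_le (\prod_(t <- s) (kappa t - 1)) (1 / 2).
Proof.
have [rep [rep_Teps rep_res]] := exists_representatives res (in_Teps_one p).
have L0_gt0 : (0 < #|S| * p ^ n)%N.
  by rewrite muln_gt0 expn_gt0 (prime_gt0 p_prime) andbT; apply/card_gt0P; exists (res tone).
exists (#|S| * p ^ n)%N => // s Hs Es.
apply: (op_le_prod_near HN char_image1 char_imageM char_image_le
  (f := fun g => kappa (rep g) - 1) (gs := res) (M := p ^ n) _ _ _ _ Hs) => [|g|g|t Ht||];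
  rewrite ?Es //.
- by apply/andP; split; lra.
- exact/op_le_char_sub1/(proj1 (rep_Teps g)).
- exact/op_le_char_sub1_expn/rep_Teps.
- by apply: op_le_char_sub1_residue (proj1 Ht) (rep_res _ Ht); apply: (proj1 (rep_Teps _)).
Qed.

End BlockContraction.
End Residues.
End Character.

Lemma bernoulli_ineq (a : R) k : 0 <= a <= 1 -> 1 - k%:R * a <= (1 - a) ^+ k.
Proof.
move=> /andP[a0 a1]; elim: k => [|k IH]; first by rewrite mul0r subr0 expr0.
have k0 : 0 <= k%:R :> R by apply: ler0n.
rewrite exprSr -natr1; apply: le_trans (_ : (1 - k%:R * a) * (1 - a) <= _); first by nra.
by apply: ler_wpM2r => //; lra.
Qed.

Lemma exists_contraction_rate L0 : (0 < L0)%N ->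
  exists2 c : R, 0 < c < 1 & 1 / 2 <= c ^+ L0.
Proof.
move=> L0_gt0; have L0R : 1 <= L0%:R :> R by rewrite (ler_nat _ 1).
have e_gt0 : 0 < (2 * L0%:R : R)^-1 by rewrite invr_gt0; lra.
have e_le : (2 * L0%:R : R)^-1 <= 1 / 2 by rewrite mul1r lef_pV2 ?posrE; lra.
exists (1 - (2 * L0%:R)^-1); first by apply/andP; split; lra.
apply: le_trans (bernoulli_ineq _ _); last by apply/andP; split; lra.
by rewrite invfM mulrCA divff ?mulr1; lra.
Qed.

Lemma norm_complete_equiv (A : comUnitRingType) (N N' : A -> R) (C : R) :
  0 < C -> (forall a, C * N a <= N' a <= N a) -> norm_complete N -> norm_complete N'.
Proof.
move=> C0 NN' Ncomp u u_cauchy.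
have [l ul] : exists l, forall e : R, 0 < e -> exists M : nat, forall n : nat,
    (M <= n)%N -> N (u n - l) < e.
  apply: Ncomp => e e0; have [M HM] := u_cauchy (C * e) (mulr_gt0 C0 e0).
  exists M => m n Mm Mn; rewrite -(ltr_pM2l C0).
  by apply: le_lt_trans (HM m n Mm Mn); case/andP: (NN' (u m - u n)).
exists l => e e0; have [M HM] := ul e e0; exists M => n Mn.
by apply: le_lt_trans (HM n Mn); case/andP: (NN' (u n - l)).
Qed.

Theorem mainTheorem13 (p : nat) (m : nat) (O : 'I_m -> idomainType)
  (iO : forall v : 'I_m, {rmorphism Zpadic p -> O v}) (d : 'I_m -> nat)
  (A : comUnitRingType) (N : A -> Rdefinitions.R) (w : A) (iota : {rmorphism Zpadic p -> A})
  (kappa : torus_pts O d -> A) :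
  prime p ->
  (forall v, padic_int_ring (iO v)) ->
  noetherian A ->
  banach_tate N w iota ->
  is_character kappa ->
  char_continuous p N kappa ->
  exists N' : A -> Rdefinitions.R,
    [/\ banach_tate N' w iota,
        (exists s : Rdefinitions.R, 0 < s /\ bounded_equiv (fun r => N r `^ s) N'),
        (forall t, in_T0 t -> N' (kappa t) <= 1)
      & (forall t, in_Teps p t -> N' (kappa t - 1) < 1)].
Proof.
move=> p_prime HO _ [HN Ncomp [w_unit Nw_lt1 NwM] N_iota] Hk kappa_cont.
have [n near1] := char_near1 Hk kappa_cont.
have [S [res res_congr]] := torus_residue_finite d (prime_gt0 p_prime) HO n.
have [B KB] := char_image_bounded HN Hk near1 res_congr.
have [L0 L0_gt0 block] := char_sub1_block_contracts p_prime HN N_iota Hk near1 res_congr KB.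
have [c /andP[c_gt0 c_lt1] cL0] := exists_contraction_rate L0_gt0.
have [N' [HN' [C C_gt0 NN'] N'Z N'K N'x]] := exists_contracting_norm HN (char_image1 Hk)
  (char_imageM Hk) KB c_gt0 c_lt1 L0_gt0 (fun t Ht => op_le_char_sub1 HN Hk KB (proj1 Ht))
  (fun s Hs Es => op_leW HN (char_image1 Hk) KB cL0 (block s Hs Es)).
have Nw_gt0 : 0 < N w.
  by apply: (na_norm_gt0 HN); apply: contraTneq w_unit => ->; rewrite unitr0.
have N'wM : forall a, N' (w * a) = N w * N' a by apply: N'Z.
have N'w : N' w = N w by have := N'wM 1; rewrite mulr1 (na_norm1 HN') mulr1.
exists N'; split.
- split=> //; first exact: norm_complete_equiv C_gt0 NN' Ncomp.
    by split; rewrite ?N'w // => a; rewrite N'wM N'w.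
  by move=> k x Hx; apply: le_trans (N_iota _ _ Hx); case/andP: (NN' (iota x)).
- exists 1; split; first exact: ltr01.
  exists C, 1; split=> // a; rewrite powRr1 ?mul1r //; exact: na_norm_ge0.
- by move=> t Ht; apply: N'K; exists t.
- by move=> t Ht; apply: le_lt_trans c_lt1; apply: N'x.
Qed.
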